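(* Let $f_{AH}(x)=\frac{x+1}{2}-\frac{2x}{x+1}$ for $x\in(0,\infty)$, let $f_{AH}^*(u)=u\,f_{AH}\!\left(\frac{1-u}{u}\right)$ for $u\in(0,1)$, extended by continuity to $[0,1]$ (explicitly $f_{AH}^*(u)=\frac12(2u-1)^2$), and define $\overline M_{AH}(C_1,C_2)=E_X\{f_{AH}^*(P(C_2\mid x))\}$. Then $$P_e\le \frac12\left[1-2\,\overline M_{AH}(C_1,C_2)\right].$$
   Context: Two-class decision problem: classes $C_1,C_2$, an observation $x$ in a space $\mathrm X$ with density $p(x)$, and a posteriori probabilities $P(C_1\mid x),P(C_2\mid x)\ge0$ with $P(C_1\mid x)+P(C_2\mid x)=1$. $E_X\{g(x)\}=\int_{\mathrm X} g(x)p(x)\,dx$. $P_e=E_X\{\min(P(C_1\mid x),P(C_2\mid x))\}$ is the Bayesian probability of error. *)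

From mathcomp Require Import all_boot all_order all_algebra.
From mathcomp Require Import all_classical all_reals all_analysis.
Set Implicit Arguments. Unset Strict Implicit. Unset Printing Implicit Defensive.
Import Order.TTheory GRing.Theory Num.Theory.
Local Open Scope ring_scope.

Definition f_AH (R : realType) (x : R) : R := (x + 1) / 2 - (2 * x) / (x + 1).

(* f*_AH(u) = u f_AH((1-u)/u) on (0,1), extended by continuity to [0,1]
   (the continuous extension takes the value 1/2 at u = 0 and u = 1). *)
Definition f_AH_star (R : realType) (u : R) : R :=
  if (0 < u) && (u < 1) then u * f_AH ((1 - u) / u) else 1 / 2.

Definition EX d (T : measurableType d) (R : realType)
  (mu : {measure set T -> \bar R}) (p : T -> R) (g : T -> R) : \bar R :=
  (\int[mu]_x ((g x * p x)%:E))%E.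

Definition Pe d (T : measurableType d) (R : realType)
  (mu : {measure set T -> \bar R}) (p P1 P2 : T -> R) : \bar R :=
  EX mu p (fun x => Num.min (P1 x) (P2 x)).

Definition M_AH d (T : measurableType d) (R : realType)
  (mu : {measure set T -> \bar R}) (p P2 : T -> R) : \bar R :=
  EX mu p (fun x => f_AH_star (P2 x)).

From mathcomp Require Import all_boot all_order all_algebra.
From mathcomp Require Import all_classical all_reals all_analysis.
From mathcomp Require Import measurable_realfun ring lra.
Import Order.TTheory GRing.Theory Num.Theory.
Local Open Scope ring_scope.

(* Since f*_AH(u) = (2u - 1)^2 / 2, the theorem is the expectation of the
   pointwise bound  min(1 - u, u) + (2u - 1)^2 / 2 <= 1/2  on [0, 1]
   (for u <= 1/2 it reads 2u(2u - 1) <= 0), taken against the probability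
   density p. *)

Lemma f_AH_star_sqr (R : realType) (u : R) : 0 <= u <= 1 ->
  f_AH_star u = (2 * u - 1) ^+ 2 / 2.
Proof.
move=> /andP[u_ge0 u_le1]; rewrite /f_AH_star /f_AH.
case: ifP => [/andP[u_gt0 _]|/negbT].
  have u_neq0 : u != 0 by rewrite gt_eqF.
  have -> : (1 - u) / u + 1 = u^-1 by field.
  by field.
rewrite negb_and -!leNgt => /orP[u_le0|u_ge1].
- have -> : u = 0 by lra.
  by field.
- have -> : u = 1 by lra.
  by field.
Qed.

Lemma minr_compl_add_sqr_le (R : realType) (u : R) : 0 <= u <= 1 ->
  Num.min (1 - u) u + (2 * u - 1) ^+ 2 / 2 <= 1 / 2.
Proof.
move=> /andP[u_ge0 u_le1]; rewrite /Num.min; case: ltP => h.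
- have : 0 <= (2 * u - 1) * (1 - u) by rewrite mulr_ge0 // subr_ge0; lra.
  lra.
- have : 0 <= u * (1 - 2 * u) by rewrite mulr_ge0 // subr_ge0; lra.
  lra.
Qed.

Lemma lee_half_subr2 (R : realType) (a b : \bar R) :
  (0 <= a)%E -> (0 <= b)%E -> (a + b <= (1 / 2)%:E)%E ->
  (a <= (1 / 2)%:E * (1 - 2%:E * b))%E.
Proof.
case: a => [a| |] //; case: b => [b| |] // _ _.
rewrite -EFinD !lee_fin; lra.
Qed.

Section expectation_under_density.
Context d (T : measurableType d) (R : realType).
Variables (mu : {measure set T -> \bar R}) (p : T -> R).
Hypotheses (p_meas : measurable_fun setT p) (p_ge0 : forall x, 0 <= p x).
Hypothesis p_density : (\int[mu]_x (p x)%:E = 1)%E.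

Let mEFin_weighted (g : T -> R) : measurable_fun setT g ->
  measurable_fun setT (fun x => (g x * p x)%:E).
Proof.
by move=> g_meas; apply/measurable_EFinP; exact: measurable_funM.
Qed.

Lemma EX_ge0 (g : T -> R) : (forall x, 0 <= g x) -> (0 <= EX mu p g)%E.
Proof. by move=> g_ge0; apply: integral_ge0 => x _; rewrite lee_fin mulr_ge0. Qed.

Lemma ge0_EXD (f g : T -> R) :
  measurable_fun setT f -> measurable_fun setT g ->
  (forall x, 0 <= f x) -> (forall x, 0 <= g x) ->
  EX mu p (fun x => f x + g x) = (EX mu p f + EX mu p g)%E.
Proof.
move=> f_meas g_meas f_ge0 g_ge0; rewrite /EX -ge0_integralD //.
- by apply: eq_integral => x _; rewrite mulrDl EFinD.
- by move=> x _; rewrite lee_fin mulr_ge0.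
- exact: mEFin_weighted.
- by move=> x _; rewrite lee_fin mulr_ge0.
- exact: mEFin_weighted.
Qed.

Lemma ge0_EX_le_cst (g : T -> R) (c : R) :
  measurable_fun setT g -> (forall x, 0 <= g x) -> (forall x, g x <= c) ->
  (EX mu p g <= c%:E)%E.
Proof.
move=> g_meas g_ge0 g_le_c.
have c_ge0 : 0 <= c by apply: le_trans (g_ge0 point) (g_le_c point).
rewrite -[c%:E]mule1 -p_density -ge0_integralZl //; first last.
- by move=> x _; rewrite lee_fin.
- exact/measurable_EFinP.
apply: ge0_le_integral => //.
- by move=> x _; rewrite lee_fin mulr_ge0.
- exact: mEFin_weighted.
- by apply/measurable_EFinP; exact: measurable_funM.
by move=> x _; rewrite -EFinM lee_fin ler_wpM2r.
Qed.

End expectation_under_density.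

Theorem mainTheorem9 (d : measure_display) (T : measurableType d) (R : realType)
  (mu : {measure set T -> \bar R}) (p P1 P2 : T -> R)
  (p_meas : measurable_fun setT p) (p_ge0 : forall x, 0 <= p x)
  (p_density : (\int[mu]_x (p x)%:E = 1)%E)
  (P1_meas : measurable_fun setT P1) (P2_meas : measurable_fun setT P2)
  (P1_ge0 : forall x, 0 <= P1 x) (P2_ge0 : forall x, 0 <= P2 x)
  (P12_sum : forall x, P1 x + P2 x = 1) :
  (Pe mu p P1 P2 <= (1 / 2)%:E * (1 - 2%:E * M_AH mu p P2))%E.
Proof.
have P1E x : P1 x = 1 - P2 x by rewrite -(P12_sum x) addrK.
have P2_bnd x : 0 <= P2 x <= 1.
  by rewrite P2_ge0 /= -(P12_sum x) lerDr.
set e := fun x => Num.min (P1 x) (P2 x).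
set s := fun x => (2 * P2 x - 1) ^+ 2 / 2.
have e_ge0 x : 0 <= e x by rewrite /e le_min P1_ge0 P2_ge0.
have s_ge0 x : 0 <= s x by rewrite /s divr_ge0 ?sqr_ge0.
have e_meas : measurable_fun setT e by exact: measurable_minr.
have s_meas : measurable_fun setT s.
  by apply: measurable_funM => //; apply: measurable_funX;
     apply: measurable_funB => //; exact: measurable_funM.
have -> : M_AH mu p P2 = EX mu p s.
  by apply: eq_integral => x _; rewrite /s f_AH_star_sqr.
apply: lee_half_subr2; [exact: EX_ge0|exact: EX_ge0|].
rewrite -ge0_EXD //; apply: ge0_EX_le_cst => //.
- exact: measurable_funD.
- by move=> x; exact: addr_ge0 (e_ge0 x) (s_ge0 x).
- by move=> x; rewrite P1E; exact: minr_compl_add_sqr_le.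
Qed.
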